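(* Let $p_1,p_2,p_3\in\mathbb C$ be non-collinear with $|p_1-p_3|=1$, $|p_2-p_1|\le1$, $|p_2-p_3|\le1$, and let $\delta>0$ be twice the area of the triangle with vertices $p_1,p_2,p_3$. Write $p_j=re^{i\theta_j}$ with a common $r>0$ (the circumradius, after translating the circumcenter to $0$). For $\theta\in\mathbb R$ let $c_j(\theta)=r\cos(\theta_j-\theta)$. On any open interval of $\theta$ on which the labeling satisfies $c_1(\theta)\le c_2(\theta)\le c_3(\theta)$ (after a fixed permutation of indices), the function $t(\theta)=\frac{c_2(\theta)-c_1(\theta)}{c_3(\theta)-c_1(\theta)}$ is differentiable and satisfies $$\delta\le\Big|\frac{dt}{d\theta}\Big|\le\delta^{-1}.$$ *)

From Stdlib Require Import Reals.
Open Scope R_scope.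

Inductive idx : Set := I1 | I2 | I3.

Definition pdist (x y : idx -> R) (i j : idx) : R :=
  sqrt ((x i - x j)^2 + (y i - y j)^2).

(* Signed cross product (p2 - p1) x (p3 - p1): twice the signed area. *)
Definition cross (x y : idx -> R) : R :=
  (x I2 - x I1) * (y I3 - y I1) - (x I3 - x I1) * (y I2 - y I1).

Definition delta (x y : idx -> R) : R := Rabs (cross x y).

Definition cfun (r : R) (th : idx -> R) (j : idx) (t : R) : R :=
  r * cos (th j - t).

Definition tfun (r : R) (th : idx -> R) (i j k : idx) (t : R) : R :=
  (cfun r th j t - cfun r th i t) / (cfun r th k t - cfun r th i t).

From Stdlib Require Import Reals Lra Psatz.
Open Scope R_scope.

(* Fix θ and read the vertices in the orthonormal frame
   e = (cos θ, sin θ), e⊥ = (-sin θ, cos θ) centred at the circumcentre (a,b):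
   c_m(θ) is the e-coordinate of p_m and its derivative r sin(θ_m - θ) is the
   e⊥-coordinate.  With A = p_j - p_i = (u,v) and B = p_k - p_i = (d,w) in this
   frame, the quotient rule gives t'(θ) = (v d - w u) / d², and since rotations
   preserve cross products, v d - w u = ∓δ.  The ordering c_i ≤ c_j ≤ c_k says
   0 ≤ u ≤ d, and all side lengths are at most 1, so writing
   v d - w u = (d - u) v - u (w - v) gives δ ≤ d; moreover d ≤ |B| ≤ 1.
   Hence |t'| = δ / d² with δ ≤ d ≤ 1, which lies in [δ, 1/δ]. *)

Lemma derivable_cfun (r : R) (th : idx -> R) (m : idx) (t : R) :
  derivable_pt_lim (cfun r th m) t (r * sin (th m - t)).
Proof.
  assert (Hlin : derivable_pt_lim (fun u => th m - u) t (0 - 1)).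
  { apply (derivable_pt_lim_minus (fct_cte (th m)) id).
    - apply derivable_pt_lim_const.
    - apply derivable_pt_lim_id. }
  pose proof (derivable_pt_lim_comp _ cos _ _ _ Hlin
                (derivable_pt_lim_cos (th m - t))) as Hcos.
  replace (r * sin (th m - t)) with (r * (- sin (th m - t) * (0 - 1))) by ring.
  exact (derivable_pt_lim_scal _ r _ _ Hcos).
Qed.

Lemma derivable_tfun (r : R) (th : idx -> R) (i j k : idx) (t : R) :
  cfun r th k t - cfun r th i t <> 0 ->
  derivable_pt_lim (tfun r th i j k) t
    (((r * sin (th j - t) - r * sin (th i - t)) * (cfun r th k t - cfun r th i t)
      - (r * sin (th k - t) - r * sin (th i - t)) * (cfun r th j t - cfun r th i t))
     / (cfun r th k t - cfun r th i t) ^ 2).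
Proof.
  intros Hne.
  pose proof (derivable_pt_lim_div _ _ t _ _
    (derivable_pt_lim_minus _ _ _ _ _ (derivable_cfun r th j t) (derivable_cfun r th i t))
    (derivable_pt_lim_minus _ _ _ _ _ (derivable_cfun r th k t) (derivable_cfun r th i t))
    Hne) as Hdiv.
  rewrite <- Rsqr_pow2; exact Hdiv.
Qed.

Definition sqdist (x y : idx -> R) (i j : idx) : R := (x i - x j)^2 + (y i - y j)^2.

Definition crossg (x y : idx -> R) (i j k : idx) : R :=
  (x j - x i) * (y k - y i) - (x k - x i) * (y j - y i).

Lemma crossg_delta (x y : idx -> R) (i j k : idx) :
  i <> j -> j <> k -> i <> k -> Rabs (crossg x y i j k) = delta x y.
Proof.
  intros; unfold delta, cross, crossg.
  destruct i, j, k; try congruence;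
    first [f_equal; ring | rewrite <- Rabs_Ropp; f_equal; ring].
Qed.

Section RotatedFrame.
Variables (x y : idx -> R) (a b t : R).

Definition along (m : idx) : R := (x m - a) * cos t + (y m - b) * sin t.
Definition across (m : idx) : R := (y m - b) * cos t - (x m - a) * sin t.

Lemma rotated_sqdist (m n : idx) :
  (along m - along n)^2 + (across m - across n)^2 = sqdist x y m n.
Proof.
  transitivity (sqdist x y m n * ((sin t)² + (cos t)²)).
  - unfold along, across, sqdist, Rsqr; ring.
  - rewrite sin2_cos2; ring.
Qed.

Lemma rotated_cross (i j k : idx) :
  (across j - across i) * (along k - along i)
  - (across k - across i) * (along j - along i) = - crossg x y i j k.
Proof.
  transitivity (- crossg x y i j k * ((sin t)² + (cos t)²)).
  - unfold along, across, crossg, Rsqr; ring.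
  - rewrite sin2_cos2; ring.
Qed.

End RotatedFrame.

Lemma cfun_on_circle (x y th : idx -> R) (a b r t : R) (m : idx) :
  x m = a + r * cos (th m) -> y m = b + r * sin (th m) ->
  cfun r th m t = along x y a b t m /\ r * sin (th m - t) = across x y a b t m.
Proof.
  intros Hx Hy; unfold cfun, along, across; rewrite cos_minus, sin_minus, Hx, Hy.
  split; ring.
Qed.

(* Planar estimate: for A = (u,v) and B = (d,w) with |A| ≤ 1, |B - A| ≤ 1 and
   0 ≤ u ≤ d, the cross product is at most d, since v d - w u = (d-u) v - u (w-v). *)
Lemma cross_le_base (u v d w : R) :
  0 <= u <= d -> u^2 + v^2 <= 1 -> (d - u)^2 + (w - v)^2 <= 1 ->
  Rabs (v * d - w * u) <= d.
Proof.
  intros Hud HA HBA.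
  assert (Hv : Rabs v <= 1) by (apply Rabs_le; nra).
  assert (Hwv : Rabs (w - v) <= 1) by (apply Rabs_le; nra).
  replace (v * d - w * u) with ((d - u) * v + u * - (w - v)) by ring.
  eapply Rle_trans; [apply Rabs_triang|].
  rewrite !Rabs_mult, Rabs_Ropp, (Rabs_pos_eq (d - u)), (Rabs_pos_eq u) by lra.
  nra.
Qed.

Lemma ratio_bounds (dl d : R) : 0 < dl <= d -> d <= 1 -> dl <= dl / d^2 <= / dl.
Proof.
  intros Hdl Hd1.
  assert (Hd2 : 0 < d^2) by nra.
  assert (Hd21 : d^2 <= 1) by nra.
  split.
  - apply (Rmult_le_reg_r (d^2)); [exact Hd2|].
    replace (dl / d^2 * d^2) with dl by (field; lra).
    nra.
  - apply (Rmult_le_reg_r (dl * d^2)); [nra|].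
    replace (dl / d^2 * (dl * d^2)) with (dl * dl) by (field; lra).
    replace (/ dl * (dl * d^2)) with (d^2) by (field; lra).
    nra.
Qed.

Lemma sqdist_le_1 (x y : idx -> R) :
  pdist x y I1 I3 = 1 -> pdist x y I2 I1 <= 1 -> pdist x y I2 I3 <= 1 ->
  forall i j, sqdist x y i j <= 1.
Proof.
  assert (Hsq : forall i j, pdist x y i j <= 1 -> sqdist x y i j <= 1).
  { intros i j H; apply sqrt_le_0; [unfold sqdist; apply Rplus_le_le_0_compat; apply pow2_ge_0 | lra |].
    rewrite sqrt_1; exact H. }
  assert (Hsym : forall i j, sqdist x y i j = sqdist x y j i)
    by (intros; unfold sqdist; ring).
  intros H13 H21 H23 i j.
  apply Req_le, Hsq in H13; apply Hsq in H21; apply Hsq in H23.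
  destruct i, j;
    first [ assumption | rewrite Hsym; assumption
          | unfold sqdist; ring_simplify; lra ].
Qed.

Lemma delta_le_base_le_1 (x y : idx -> R) (a b t : R) (i j k : idx) :
  i <> j -> j <> k -> i <> k ->
  (forall m n, sqdist x y m n <= 1) ->
  along x y a b t i <= along x y a b t j <= along x y a b t k ->
  delta x y <= along x y a b t k - along x y a b t i <= 1.
Proof.
  intros Hij Hjk Hik Hq Hord.
  pose proof (rotated_sqdist x y a b t j i) as Hji.
  pose proof (rotated_sqdist x y a b t k i) as Hki.
  pose proof (rotated_sqdist x y a b t k j) as Hkj.
  pose proof (rotated_cross x y a b t i j k) as Hnum.
  assert (Hud : 0 <= along x y a b t j - along x y a b t i
                  <= along x y a b t k - along x y a b t i) by lra.
  set (u := along x y a b t j - along x y a b t i) in *.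
  set (v := across x y a b t j - across x y a b t i) in *.
  set (d := along x y a b t k - along x y a b t i) in *.
  set (w := across x y a b t k - across x y a b t i) in *.
  split.
  - rewrite <- (crossg_delta x y i j k Hij Hjk Hik), <- Rabs_Ropp, <- Hnum.
    apply cross_le_base; [exact Hud | rewrite Hji; apply Hq |].
    replace ((d - u)^2 + (w - v)^2) with (sqdist x y k j)
      by (rewrite <- Hkj; unfold d, u, w, v; ring).
    apply Hq.
  - specialize (Hq k i); nra.
Qed.

Theorem mainTheorem14 (x y th : idx -> R) (a b r : R) :
  0 < r ->
  (forall j, x j = a + r * cos (th j) /\ y j = b + r * sin (th j)) ->
  cross x y <> 0 ->
  pdist x y I1 I3 = 1 ->
  pdist x y I2 I1 <= 1 ->
  pdist x y I2 I3 <= 1 ->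
  forall i j k : idx, i <> j -> j <> k -> i <> k ->
  forall lo hi : R, lo < hi ->
  (forall t, lo < t < hi ->
     cfun r th i t <= cfun r th j t <= cfun r th k t) ->
  forall t, lo < t < hi ->
    exists l, derivable_pt_lim (tfun r th i j k) t l /\
      delta x y <= Rabs l <= / delta x y.
Proof.
  intros _ Hcirc Hcr H13 H21 H23 i j k Hij Hjk Hik lo hi _ Hord t Ht.
  assert (Hc : forall m, cfun r th m t = along x y a b t m)
    by (intro m; destruct (Hcirc m); apply cfun_on_circle; assumption).
  assert (Hs : forall m, r * sin (th m - t) = across x y a b t m)
    by (intro m; destruct (Hcirc m); apply cfun_on_circle; assumption).
  pose proof (derivable_tfun r th i j k t) as Hder.
  specialize (Hord t Ht).
  rewrite !Hc, !Hs in Hder; rewrite !Hc in Hord.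
  pose proof (delta_le_base_le_1 x y a b t i j k Hij Hjk Hik
                (sqdist_le_1 x y H13 H21 H23) Hord) as Hbase.
  assert (Hdelta_pos : 0 < delta x y) by (apply Rabs_pos_lt; exact Hcr).
  eexists; split; [apply Hder; lra|].
  (* The numerator of t' is ∓δ, so |t'| = δ / d². *)
  rewrite rotated_cross; unfold Rdiv.
  rewrite Rabs_mult, Rabs_Ropp, crossg_delta, Rabs_inv, Rabs_pos_eq
    by first [assumption | apply pow2_ge_0].
  apply ratio_bounds; lra.
Qed.
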